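(* Consider the homophily-based model $X(t+1)=f_{\mathrm{HbM}}(X(t))$, $f_{\mathrm{HbM}}(X)=\operatorname{diag}(|X|\mathbf{1}_n)^{-1}XX^{\top}$. Let $Q_{\mathrm{HbM}}$ be the set of matrices $PYP^{\top}\in\mathcal{S}_{\mathrm{nz\text{-}row}}$ with $P$ a permutation matrix and $Y$ block diagonal with each diagonal block of the form $\alpha bb^{\top}$, $\alpha>0$, $b\in\{-1,+1\}^m$, $m\le n$. Then: (i) each element of $Q_{\mathrm{HbM}}$ of rank one is a locally stable fixed point of $f_{\mathrm{HbM}}$; (ii) for every $X(0)\in\mathcal{S}_{\mathrm{nz\text{-}row}}$, the following are equivalent: (a) the solution $X(t)$ satisfies the non-vanishing appraisal condition $\liminf_{t\to\infty}\min_{i,j}|X_{ij}(t)|>0$; (b) there exists $t_0>0$ such that $G(X(t))$ satisfies social balance for all $t\ge t_0$; (c) there exists $X^*\in Q_{\mathrm{HbM}}$ of rank one such that $\lim_{t\to\infty}X(t)=X^*$.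
   Context: $\mathcal{S}_{\mathrm{nz\text{-}row}}=\{X\in\mathbb{R}^{n\times n}:\text{every row of }X\text{ is non-zero}\}$; $|X|$ is entry-wise absolute value, $\mathbf{1}_n$ the all-ones vector. A fixed point $X^*$ of a map $f$ is locally stable if for every $\epsilon>0$ there is $\zeta>0$ such that $\max_{i,j}|X_{ij}(0)-X^*_{ij}|<\zeta$ implies $\max_{i,j}|X_{ij}(t)-X^*_{ij}|<\epsilon$ for all $t\ge0$, where $X(t+1)=f(X(t))$. $G(X)$ is the weighted digraph with adjacency matrix $X$; $G(X)$ satisfies social balance if $X_{ii}>0$ for all $i$ and $\operatorname{sign}(X_{ij})\operatorname{sign}(X_{jk})\operatorname{sign}(X_{ki})=1$ for all $i,j,k$. *)

From HB Require Import structures.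
From mathcomp Require Import all_boot all_order all_algebra all_fingroup.
From mathcomp Require Import all_classical all_reals all_analysis.
Set Implicit Arguments. Unset Strict Implicit. Unset Printing Implicit Defensive.
Import Order.TTheory GRing.Theory Num.Theory.
Import numFieldNormedType.Exports.
Local Open Scope ring_scope.

Section HbM.
Variable R : realType.
Variable n : nat.

Definition hbm_nz_row (X : 'M[R]_n) : Prop := forall i : 'I_n, row i X != 0.

Definition hbm_abs_row_sums (X : 'M[R]_n) : 'rV[R]_n := \row_i \sum_j `|X i j|.

Definition f_HbM (X : 'M[R]_n) : 'M[R]_n :=
  invmx (diag_mx (hbm_abs_row_sums X)) *m (X *m X^T).

Definition hbm_traj (X0 : 'M[R]_n) (t : nat) : 'M[R]_n := iter t f_HbM X0.

Definition hbm_max_abs_dist (A B : 'M[R]_n) : R := \big[Num.max/0]_(i < n) \big[Num.max/0]_(j < n) `|A i j - B i j|.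

Definition is_fixed_point (Xs : 'M[R]_n) : Prop := f_HbM Xs = Xs.

Definition locally_stable (Xs : 'M[R]_n) : Prop :=
  forall eps : R, 0 < eps -> exists zeta : R, 0 < zeta /\
    forall X0 : 'M[R]_n, hbm_max_abs_dist X0 Xs < zeta ->
      forall t : nat, hbm_max_abs_dist (hbm_traj X0 t) Xs < eps.

Definition in_Q_HbM (X : 'M[R]_n) : Prop :=
  hbm_nz_row X /\
  exists (k : nat) (p : 'I_k -> nat) (E : (\sum_(i < k) p i)%N = n)
         (alpha : 'I_k -> R) (b : forall i : 'I_k, 'cV[R]_(p i)) (s : 'S_n),
    (forall i, 0 < alpha i) /\
    (forall i (l : 'I_(p i)), b i l ord0 = 1 \/ b i l ord0 = -1) /\
    X = perm_mx s *m castmx (E, E) (@mxdiag R k p (fun i => alpha i *: (b i *m (b i)^T)))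
          *m (perm_mx s)^T.

(* min_{i,j} |X_ij| as an extended real (+oo for the empty matrix) *)
Definition hbm_min_abs (X : 'M[R]_n) : \bar R :=
  \big[Order.min/+oo%E]_(i < n) \big[Order.min/+oo%E]_(j < n) (`|X i j|)%:E.

Definition non_vanishing_appraisal (X : nat -> 'M[R]_n) : Prop :=
  (0 < limn_einf (fun t => hbm_min_abs (X t)))%E.

Definition social_balance (X : 'M[R]_n) : Prop :=
  (forall i, 0 < X i i) /\
  (forall i j k, Num.sg (X i j) * Num.sg (X j k) * Num.sg (X k i) = 1).

End HbM.

From HB Require Import structures.
From mathcomp Require Import all_boot all_order all_algebra all_fingroup.
From mathcomp Require Import all_classical all_reals all_analysis.
From mathcomp Require Import ring lra.
Import Order.TTheory GRing.Theory Num.Theory.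
Import numFieldNormedType.Exports.
Set Implicit Arguments. Unset Strict Implicit. Unset Printing Implicit Defensive.
Local Open Scope ring_scope.
Local Open Scope classical_set_scope.

(* Conjugating X by diag c for a signature c (c_i = +-1) gives the matrix
   c_i c_j X_ij.  When all these entries are positive, f_HbM acts on them by
   replacing entry (i, j) with the average of row j weighted by row i.  Hence
   every interval [a, b] with a > 0 containing all entries is invariant, which
   gives the local stability of A c c^T, and two steps shrink its width by a
   fixed factor, so X(t) converges to some L c c^T.  Social balance is exactly
   the existence of such a signature.  Conversely, if the entries stay at
   least d in modulus but no signature ever works, then every other step some
   row of products X_jl X_kl has mixed signs, and the resulting cancellation
   lowers the largest modulus of an entry by a fixed amount: impossible. *)

Section WeightedAverage.
Variables (R : realFieldType) (I : finType).
Implicit Types (F w v : I -> R) (a b rho : R).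

Lemma ler_sum_term F i : (forall k, 0 <= F k) -> F i <= \sum_k F k.
Proof. by move=> F_ge0; rewrite (bigD1 i) //= lerDl sumr_ge0. Qed.

Lemma sum_gt0_term F i : (forall k, 0 <= F k) -> 0 < F i -> 0 < \sum_k F k.
Proof. by move=> F_ge0 /lt_le_trans; apply; apply: ler_sum_term. Qed.

Lemma ler_sum_cst F b : (forall k, F k <= b) -> \sum_k F k <= #|I|%:R * b.
Proof.
move=> F_le; apply: le_trans (ler_sum _ (fun k _ => F_le k)) _.
by rewrite sumr_const mulr_natl.
Qed.

Lemma normr_sum_le_opposite F i0 :
  \sum_i F i != 0 -> (\sum_i F i) * F i0 <= 0 ->
  `|\sum_i F i| <= \sum_i `|F i| - 2 * `|F i0|.
Proof.
move=> sum_neq0 opposite; set s := Num.sg (\sum_i F i).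
have sF_le i : s * F i <= `|F i|.
  by rewrite (le_trans (ler_norm _)) // normrM normr_sg sum_neq0 mul1r.
have sFi0 : s * F i0 = - `|F i0|.
  have sFi0_le0 : s * F i0 <= 0.
    have S_gt0 : 0 < `|\sum_i F i| by rewrite normr_gt0.
    by rewrite -(pmulr_rle0 _ S_gt0) mulrA [`|_| * _]mulrC -numEsg.
  by rewrite -[LHS]opprK -(ler0_norm sFi0_le0) normrM normr_sg sum_neq0 mul1r.
rewrite normrEsg -/s mulr_sumr (bigD1 i0) //= [X in _ <= X - _](bigD1 i0) //= sFi0.
have : \sum_(i | i != i0) s * F i <= \sum_(i | i != i0) `|F i|.
  by apply: ler_sum => i _; apply: sF_le.
lra.
Qed.

Definition wavg w v := (\sum_k w k * v k) / \sum_k w k.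

Lemma wavg_bounds w v a b : (forall k, 0 <= w k) -> 0 < \sum_k w k ->
  (forall k, a <= v k <= b) -> a <= wavg w v <= b.
Proof.
move=> w_ge0 sum_gt0 v_ab; rewrite ler_pdivlMr // ler_pdivrMr // !mulr_sumr.
apply/andP; split; apply: ler_sum => k _; have /andP[vka vkb] := v_ab k.
- by rewrite mulrC ler_wpM2l.
- by rewrite [b * _]mulrC ler_wpM2l.
Qed.

Lemma wavg_cst w v a : 0 < \sum_k w k -> (forall k, v k = a) -> wavg w v = a.
Proof.
move=> sum_gt0 vE; rewrite /wavg (eq_bigr (fun k => a * w k)) => [|k _]; last first.
  by rewrite vE mulrC.
by rewrite -mulr_sumr mulfK ?lt0r_neq0.
Qed.

Lemma wavg_subr w v a : 0 < \sum_k w k ->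
  wavg w v - a = wavg w (fun k => v k - a).
Proof.
move=> sum_gt0; rewrite /wavg.
have -> : \sum_k w k * (v k - a) = \sum_k w k * v k - a * \sum_k w k.
  by rewrite mulr_sumr -sumrB; apply: eq_bigr => k _; ring.
by field; apply: lt0r_neq0.
Qed.

Lemma wavg_rsub w v b : 0 < \sum_k w k ->
  b - wavg w v = wavg w (fun k => b - v k).
Proof.
move=> sum_gt0; rewrite /wavg.
have -> : \sum_k w k * (b - v k) = b * \sum_k w k - \sum_k w k * v k.
  by rewrite mulr_sumr -sumrB; apply: eq_bigr => k _; ring.
by field; apply: lt0r_neq0.
Qed.

Lemma wavg_ge_term w v k0 rho : (forall k, 0 <= w k) -> (forall k, 0 <= v k) ->
  0 < \sum_k w k -> 0 <= rho -> rho * \sum_k w k <= w k0 ->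
  rho * v k0 <= wavg w v.
Proof.
move=> w_ge0 v_ge0 sum_gt0 rho_ge0 wk0_ge; rewrite ler_pdivlMr //.
have := ler_wpM2r (v_ge0 k0) wk0_ge.
have := @ler_sum_term (fun k => w k * v k) k0 (fun k => mulr_ge0 (w_ge0 k) (v_ge0 k)).
lra.
Qed.

End WeightedAverage.

Lemma invmx_diag (F : fieldType) n (d : 'rV[F]_n) : (forall i, d 0 i != 0) ->
  invmx (diag_mx d) = diag_mx (\row_i (d 0 i)^-1).
Proof.
move=> d_neq0.
have dV : diag_mx (\row_i (d 0 i)^-1) *m diag_mx d = 1%:M.
  rewrite mulmx_diag -diag_const_mx; congr diag_mx; apply/matrixP=> i j.
  by rewrite !mxE mulVf.
have [_ d_unit] := mulmx1_unit dV.
by rewrite -[RHS]mulmx1 -(mulmxV d_unit) mulmxA dV mul1mx.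
Qed.

Lemma rank1_outer (F : fieldType) m n (A : 'M[F]_(m, n)) : \rank A = 1%N ->
  exists (u : 'I_m -> F) (v : 'I_n -> F), forall i j, A i j = u i * v j.
Proof.
move=> rkA; have k0 : 'I_(\rank A) by rewrite rkA; exact: ord0.
have k_eq0 (k : 'I_(\rank A)) : val k = 0%N.
  by apply/eqP; rewrite -leqn0 -ltnS -rkA ltn_ord.
exists (fun i => col_base A i k0), (fun j => row_base A k0 j) => i j.
rewrite -{1}(mulmx_base A) mxE (bigD1 k0) //= big1 ?addr0 // => k /negP[].
by apply/eqP/val_inj; rewrite !k_eq0.
Qed.

Lemma tagnat_sig2_ord1 n (x : 'I_(\sum_(i < 1) (fun _ : 'I_1 => n) i)) :
  nat_of_ord (tagnat.sig2 x) = nat_of_ord x.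
Proof.
have := congr1 (@nat_of_ord _) (tagnat.sig2K x).
rewrite /tagnat.Rank tagnat.rankEsum /= big1 ?add0n // => i.
by rewrite [tagnat.sig1 x]ord1.
Qed.

Lemma limn_einf_gt0P (R : realType) (u : nat -> \bar R) :
  (0 < limn_einf u)%E <->
  exists2 d : R, 0 < d & exists N, forall t, (N <= t)%N -> (d%:E <= u t)%E.
Proof.
have -> : limn_einf u = ereal_sup (range (einfs u)).
  by rewrite limn_einf_lim; apply/cvg_lim => //; apply: cvg_einfs_sup.
split.
  move=> /ereal_sup_gt [_ [N _ <-] infN_gt0].
  have infN_le t : (N <= t)%N -> (einfs u N <= u t)%E.
    by move=> le_Nt; apply: ereal_inf_lbound; exists t.
  move: infN_gt0 infN_le; case: (einfs u N) => [r| |] infN_gt0 infN_le.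
  - by exists r; [rewrite lte_fin in infN_gt0 | exists N].
  - by exists 1 => //; exists N => t /infN_le; apply: le_trans; apply: leey.
  - by move: infN_gt0; rewrite ltNge leNye.
case=> d d_gt0 [N uN_ge]; apply: (@lt_le_trans _ _ d%:E); first by rewrite lte_fin.
apply: (@le_trans _ _ (einfs u N)); last by apply: ereal_sup_ubound; exists N.
by apply: le_ereal_inf_tmp => _ [t /= le_Nt <-]; apply: uN_ge.
Qed.

Lemma no_uniform_descent (R : archiRealFieldType) (u : nat -> R) d eta T : 0 < eta ->
  (forall t, (T <= t)%N -> d <= u t) ->
  (forall t, (T <= t)%N -> u t.+2 <= u t - eta) -> False.
Proof.
move=> eta_gt0 u_ge u_desc.
have u_le k : u (T + k.*2)%N <= u T - k%:R * eta.
  elim: k => [|k IHk]; first by rewrite addn0 mul0r subr0.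
  rewrite doubleS !addnS; apply: le_trans (u_desc _ (leq_addr _ _)) _.
  rewrite -addn1 natrD mulrDl mul1r; lra.
pose k := (Num.truncn ((u T - d) / eta)).+1.
have : u T - d < k%:R * eta by rewrite -ltr_pdivrMr // truncnS_gt.
have := u_le k; have := u_ge _ (leq_addr k.*2 T); lra.
Qed.

Section HbM.
Variables (R : realType) (n : nat).
Implicit Types (X Y Z : 'M[R]_n) (c : 'I_n -> R) (a b d A eta rho : R).

Definition signature c := forall i, c i = 1 \/ c i = -1.

Definition gauge c X i j := c i * c j * X i j.

Definition gauge_positive X :=
  exists2 c, signature c & forall i j, 0 < gauge c X i j.

Definition gauge_bounded c X a b := forall j k, a <= gauge c X j k <= b.

Definition sign_outer_mx (A : R) c : 'M[R]_n := \matrix_(i, j) (A * c i * c j).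

Lemma signature_mulss c : signature c -> forall i, c i * c i = 1.
Proof. by move=> c_sig i; case: (c_sig i) => ->; rewrite ?mulrNN mulr1. Qed.

Lemma signature_norm c : signature c -> forall i, `|c i| = 1.
Proof. by move=> c_sig i; case: (c_sig i) => ->; rewrite ?normrN normr1. Qed.

Lemma signature_sgr c : signature c -> forall i, Num.sg (c i) = c i.
Proof. by move=> c_sig i; case: (c_sig i) => ->; rewrite ?sgrN sgr1. Qed.

Lemma sgr_signature (F : 'I_n -> R) : (forall k, F k != 0) ->
  signature (fun k => Num.sg (F k)).
Proof.
move=> F_neq0 k; case: (sgrP (F k)) => [Fk0|_|_]; [|by left|by right].
by move: (F_neq0 k); rewrite Fk0 eqxx.
Qed.

Lemma gaugeK c X i j : signature c -> c i * c j * gauge c X i j = X i j.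
Proof.
move=> c_sig; rewrite /gauge.
transitivity (c i * c i * (c j * c j) * X i j); first by ring.
by rewrite !(signature_mulss c_sig) !mul1r.
Qed.

Lemma norm_gauge c X i j : signature c -> `|gauge c X i j| = `|X i j|.
Proof. by move=> c_sig; rewrite /gauge !normrM !(signature_norm c_sig) !mul1r. Qed.

Lemma dist_gauge c X Y i j : signature c ->
  `|gauge c X i j - gauge c Y i j| = `|X i j - Y i j|.
Proof.
move=> c_sig; have -> : gauge c X i j - gauge c Y i j = gauge c (X - Y) i j.
  by rewrite /gauge !mxE; ring.
by rewrite norm_gauge // !mxE.
Qed.

Lemma gauge_sign_outer_mx A c : signature c ->
  forall i j, gauge c (sign_outer_mx A c) i j = A.
Proof.
move=> c_sig i j; rewrite /gauge mxE.
transitivity (A * (c i * c i) * (c j * c j)); first by ring.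
by rewrite !(signature_mulss c_sig) !mulr1.
Qed.

Lemma f_HbME X i j : (forall i, 0 < \sum_k `|X i k|) ->
  f_HbM X i j = (\sum_k X i k * X j k) / \sum_k `|X i k|.
Proof.
move=> rows_gt0; rewrite /f_HbM invmx_diag; last first.
  by move=> k; rewrite /hbm_abs_row_sums mxE; apply: lt0r_neq0.
rewrite mul_diag_mx /hbm_abs_row_sums !mxE mulrC; congr (_ / _).
by apply: eq_bigr => k _; rewrite mxE.
Qed.

Lemma gauge_f_HbM c X i j : signature c -> (forall j k, 0 < gauge c X j k) ->
  gauge c (f_HbM X) i j = wavg (gauge c X i) (gauge c X j).
Proof.
move=> c_sig gauge_gt0.
have abs_gauge k l : `|X k l| = gauge c X k l.
  by rewrite -(norm_gauge X k l c_sig) gtr0_norm.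
have rows_gt0 k : 0 < \sum_l `|X k l|.
  by apply: (sum_gt0_term (i := k)) => [l|]; rewrite abs_gauge // ltW.
rewrite {1}/gauge f_HbME // /wavg mulrA.
have -> : \sum_k `|X i k| = \sum_k gauge c X i k by apply: eq_bigr => k _.
congr (_ / _); rewrite mulr_sumr; apply: eq_bigr => k _; rewrite /gauge.
transitivity (c i * c j * (X i k * X j k) * (c k * c k)); last by ring.
by rewrite (signature_mulss c_sig) mulr1.
Qed.

Lemma gauge_bounded_f_HbM c X a b : signature c -> 0 < a ->
  gauge_bounded c X a b -> gauge_bounded c (f_HbM X) a b.
Proof.
move=> c_sig a_gt0 Xab.
have gauge_gt0 j k : 0 < gauge c X j k.
  by case/andP: (Xab j k) => /(lt_le_trans a_gt0).
have gauge_ge0 j k : 0 <= gauge c X j k by apply: ltW.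
move=> i j; rewrite gauge_f_HbM //; apply: wavg_bounds => //.
exact: (sum_gt0_term (i := i)).
Qed.

Lemma hbm_trajS X0 t : hbm_traj X0 t.+1 = f_HbM (hbm_traj X0 t).
Proof. by rewrite /hbm_traj iterS. Qed.

Lemma gauge_bounded_traj c X0 a b s : signature c -> 0 < a ->
  gauge_bounded c (hbm_traj X0 s) a b ->
  forall t, (s <= t)%N -> gauge_bounded c (hbm_traj X0 t) a b.
Proof.
move=> c_sig a_gt0 Xsab t /subnKC <-; elim: (t - s)%N => [|k IHk].
  by rewrite addn0.
by rewrite addnS hbm_trajS; apply: gauge_bounded_f_HbM.
Qed.

Lemma gauge_bounded_gt0 c X : (forall i j, 0 < gauge c X i j) ->
  exists a b, 0 < a /\ gauge_bounded c X a b.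
Proof.
move=> gauge_gt0.
exists (\big[Num.min/1]_jk gauge c X jk.1 jk.2).
exists (\big[Num.max/0]_jk gauge c X jk.1 jk.2).
split; first by apply/bigmin_gtP; split=> // jk _; apply: gauge_gt0.
by move=> j k; rewrite (bigmin_le _ (j, k)) (le_bigmax _ _ (j, k)).
Qed.

Lemma gauge_positive_traj X0 s : gauge_positive (hbm_traj X0 s) ->
  forall t, (s <= t)%N -> gauge_positive (hbm_traj X0 t).
Proof.
case=> c c_sig /gauge_bounded_gt0 [a [b [a_gt0 Xab]]] t le_st; exists c => // i j.
by case/andP: (gauge_bounded_traj c_sig a_gt0 Xab le_st i j) => /(lt_le_trans a_gt0).
Qed.

Lemma gauge_positive_social_balance X : gauge_positive X -> social_balance X.
Proof.
case=> c c_sig gauge_gt0.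
have sgX i j : Num.sg (X i j) = c i * c j.
  rewrite -(gaugeK X i j c_sig) sgrM (gtr0_sg (gauge_gt0 i j)) mulr1 sgrM.
  by rewrite !(signature_sgr c_sig).
split=> [i|i j k].
  by have := gauge_gt0 i i; rewrite /gauge (signature_mulss c_sig) mul1r.
rewrite !sgX; transitivity (c i * c i * (c j * c j) * (c k * c k)); first by ring.
by rewrite !(signature_mulss c_sig) !mulr1.
Qed.

(* Triangles through a fixed vertex i0 show that c := sg (X i0 .) is a gauge
   making X positive. *)
Lemma social_balance_gauge_positive X : (0 < n)%N ->
  social_balance X -> gauge_positive X.
Proof.
move=> n_gt0 [diag_gt0 triangle]; pose i0 := Ordinal n_gt0.
have back j : Num.sg (X i0 j) * Num.sg (X j i0) = 1.
  by have := triangle i0 j i0; rewrite (gtr0_sg (diag_gt0 i0)) mulr1.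
have row_neq0 j : X i0 j != 0.
  apply/eqP=> Xj0; move: (back j).
  by rewrite Xj0 sgr0 mul0r => /esym/eqP; rewrite oner_eq0.
have c_sig := sgr_signature row_neq0.
exists (fun j => Num.sg (X i0 j)) => // i j.
rewrite /gauge -sgr_gt0 !sgrM !sgr_id -[X in 0 < X]mulr1 -(back j).
have -> : Num.sg (X i0 i) * Num.sg (X i0 j) * Num.sg (X i j) *
    (Num.sg (X i0 j) * Num.sg (X j i0)) =
  Num.sg (X i0 i) * Num.sg (X i j) * Num.sg (X j i0) *
    (Num.sg (X i0 j) * Num.sg (X i0 j)) by ring.
by rewrite triangle (signature_mulss c_sig) mulr1 ltr01.
Qed.

Lemma eventually_social_balanceP X0 : (0 < n)%N ->
  (exists t0, (0 < t0)%N /\ forall t, (t0 <= t)%N -> social_balance (hbm_traj X0 t))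
  <-> exists s, gauge_positive (hbm_traj X0 s).
Proof.
move=> n_gt0; split=> [[t0 [_ balanced]] | [s Xs_pos]].
  by exists t0; apply: social_balance_gauge_positive => //; apply: balanced.
exists s.+1; split=> // t /ltnW le_st.
exact/gauge_positive_social_balance/(gauge_positive_traj Xs_pos).
Qed.

Lemma mxdiag_outer_entry k (p : 'I_k -> nat) (alpha : 'I_k -> R)
    (b : forall i : 'I_k, 'cV[R]_(p i)) (i i' : 'I_k) (x : 'I_(p i)) (y : 'I_(p i')) :
  ((if i == i' then conform_mx 0 (alpha i *: (b i *m (b i)^T)) else 0)
    : 'M[R]_(p i, p i')) x y
  = if i == i' then alpha i * b i x ord0 * b i' y ord0 else 0.
Proof.
case: eqVneq => [ii'|_]; last by rewrite mxE.
by subst i'; rewrite conform_mx_id !mxE big_ord1 !mxE mulrA.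
Qed.

Lemma in_Q_HbM_entries Xs : in_Q_HbM Xs ->
  exists k (blk : 'I_n -> 'I_k) (alpha : 'I_k -> R) c,
    [/\ forall l, 0 < alpha l, signature c &
        forall u v, Xs u v = if blk u == blk v then alpha (blk u) * c u * c v else 0].
Proof.
case=> _ [k [p [E [alpha [b [s [alpha_gt0 [b_sig ->]]]]]]]].
pose pos u := cast_ord (esym E) (s u).
exists k, (fun u => tagnat.sig1 (pos u)), alpha,
  (fun u => b (tagnat.sig1 (pos u)) (tagnat.sig2 (pos u)) ord0).
split=> [//|u|u v].
  by case: (b_sig (tagnat.sig1 (pos u)) (tagnat.sig2 (pos u))) => ->; [left|right].
rewrite tr_perm_mx -row_permE -col_permE /col_perm /row_perm !mxE castmxE /=.
by rewrite /mxdiag /mxblock mxE mxdiag_outer_entry.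
Qed.

(* Two indices in different blocks would give a nonzero 2x2 minor
   Xs u u * Xs v v - Xs u v * Xs v u. *)
Lemma in_Q_HbM_rank1 Xs : in_Q_HbM Xs -> \rank Xs = 1%N ->
  exists A c, [/\ 0 < A, signature c & Xs = sign_outer_mx A c].
Proof.
move=> XsQ rkXs.
have [k [blk [alpha [sig [alpha_gt0 sig_sig XsE]]]]] := in_Q_HbM_entries XsQ.
have [u [v uvE]] := rank1_outer rkXs.
have same_blk u' v' : blk u' = blk v'.
  apply/eqP; apply/negP => /negP ne.
  have : Xs u' u' * Xs v' v' = Xs u' v' * Xs v' u' by rewrite !uvE; ring.
  rewrite !XsE !eqxx (negbTE ne) eq_sym (negbTE ne) mulr0.
  have -> : alpha (blk u') * sig u' * sig u' * (alpha (blk v') * sig v' * sig v')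
     = alpha (blk u') * alpha (blk v') * (sig u' * sig u') * (sig v' * sig v') by ring.
  by rewrite !(signature_mulss sig_sig) !mulr1 => /eqP; rewrite mulf_eq0 !gt_eqF.
have n_gt0 : (0 < n)%N by rewrite -rkXs rank_leq_row.
exists (alpha (blk (Ordinal n_gt0))), sig; split=> //; apply/matrixP=> i j.
by rewrite XsE mxE (same_blk i j) eqxx (same_blk j (Ordinal n_gt0)).
Qed.

Lemma sign_outer_mx_in_Q A c : 0 < A -> signature c ->
  in_Q_HbM (sign_outer_mx A c).
Proof.
move=> A_gt0 c_sig; split.
  move=> i; apply/eqP => /rowP/(_ i); rewrite !mxE -mulrA (signature_mulss c_sig).
  by rewrite mulr1; apply/eqP; rewrite gt_eqF.
have E : (\sum_(i < 1) (fun _ : 'I_1 => n) i)%N = n by rewrite big_ord1.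
exists 1%N, (fun _ => n), E, (fun _ => A), (fun _ => \col_(l < n) c l), 1%g.
split=> //; split=> [i l|]; first by rewrite mxE; apply: c_sig.
have ord1_eq (x y : 'I_1) : (x == y) = true by rewrite [x]ord1 [y]ord1 eqxx.
apply/matrixP => u v.
rewrite tr_perm_mx -row_permE -col_permE /col_perm /row_perm !mxE castmxE /=.
rewrite /mxdiag /mxblock mxE ord1_eq /= conform_mx_id !mxE big_ord1 !mxE !perm1 -mulrA.
by congr (A * (c _ * c _)); apply: val_inj; rewrite /= tagnat_sig2_ord1.
Qed.

Lemma rank_sign_outer_mx A c : (0 < n)%N -> 0 < A -> signature c ->
  \rank (sign_outer_mx A c) = 1%N.
Proof.
move=> n_gt0 A_gt0 c_sig; apply/eqP; rewrite eqn_leq; apply/andP; split.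
  have -> : sign_outer_mx A c = (\col_i c i) *m (\row_j (A * c j)).
    by apply/matrixP => i j; rewrite !mxE big_ord1 !mxE; ring.
  exact: mulmx_max_rank.
rewrite lt0n mxrank_eq0; apply/eqP => /matrixP/(_ (Ordinal n_gt0) (Ordinal n_gt0)).
by rewrite !mxE -mulrA (signature_mulss c_sig) mulr1; apply/eqP; rewrite gt_eqF.
Qed.

Lemma hbm_max_abs_dist_ge0 X Y : 0 <= hbm_max_abs_dist X Y.
Proof. exact: bigmax_ge_id. Qed.

Lemma ler_hbm_max_abs_dist X Y i j : `|X i j - Y i j| <= hbm_max_abs_dist X Y.
Proof.
apply: le_trans (le_bigmax _ (fun i' => \big[Num.max/0]_j' `|X i' j' - Y i' j'|) i).
exact: (le_bigmax _ (fun j' => `|X i j' - Y i j'|)).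
Qed.

Lemma hbm_max_abs_dist_le X Y D : 0 <= D ->
  (forall i j, `|X i j - Y i j| <= D) -> hbm_max_abs_dist X Y <= D.
Proof. by move=> D_ge0 XY_le; do 2![apply: bigmax_le => // ? _]. Qed.

Lemma sign_outer_mx_fixed A c : 0 < A -> signature c ->
  is_fixed_point (sign_outer_mx A c).
Proof.
move=> A_gt0 c_sig; set X := sign_outer_mx A c; apply/matrixP=> i j.
have gaugeX := gauge_sign_outer_mx A c_sig.
have gaugeX_gt0 k l : 0 < gauge c X k l by rewrite gaugeX.
rewrite -(gaugeK (f_HbM X) i j c_sig) -[RHS](gaugeK X i j c_sig); congr (_ * _).
rewrite gauge_f_HbM // (wavg_cst (a := A)) ?gaugeX //.
by apply: (sum_gt0_term (i := i)) => [k|]; rewrite gaugeX // ltW.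
Qed.

(* Within distance D < A of A c c^T the gauge-transformed entries lie in
   [A - D, A + D], an interval that f_HbM preserves. *)
Lemma sign_outer_mx_stable A c : 0 < A -> signature c ->
  locally_stable (sign_outer_mx A c).
Proof.
move=> A_gt0 c_sig eps eps_gt0; set Xs := sign_outer_mx A c.
have gaugeXs := gauge_sign_outer_mx A c_sig.
exists (Num.min eps A); split=> [|X0]; first by rewrite lt_min eps_gt0 A_gt0.
set D := hbm_max_abs_dist X0 Xs; rewrite lt_min => /andP[D_lt_eps D_lt_A] t.
have X0_bounded : gauge_bounded c (hbm_traj X0 0) (A - D) (A + D).
  move=> j k; rewrite -ler_distl -(gaugeXs j k) dist_gauge //.
  exact: ler_hbm_max_abs_dist.
have := gauge_bounded_traj c_sig _ X0_bounded (leq0n t); rewrite subr_gt0 => /(_ D_lt_A).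
move=> Xt_bounded; apply: le_lt_trans D_lt_eps.
apply: hbm_max_abs_dist_le => [|j k]; first exact: hbm_max_abs_dist_ge0.
by rewrite -(dist_gauge _ _ _ _ c_sig) gaugeXs ler_distl Xt_bounded.
Qed.

Lemma ler_mx_norm_entry X i j : `|X i j| <= `|X|.
Proof.
change (`|X i j| <= mx_norm X); rewrite mx_normrE.
exact: (le_bigmax _ (fun ij : 'I_n * 'I_n => `|X ij.1 ij.2|) (i, j)).
Qed.

Lemma mx_norm_le X B : 0 <= B -> (forall i j, `|X i j| <= B) -> `|X| <= B.
Proof.
move=> B_ge0 X_le; change (mx_norm X <= B).
by rewrite mx_normrE; apply: bigmax_le => // -[].
Qed.

Lemma cvg_mx_entrywiseP (M : nat -> 'M[R]_n) (L : 'M[R]_n) : M @ \oo --> L <->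
  forall e, 0 < e -> exists N, forall t, (N <= t)%N -> forall i j, `|L i j - M t i j| < e.
Proof.
rewrite cvgrPdist_lt; split=> [cvgM e e_gt0 | entries_cvg e e_gt0].
  have [N _ MN] := cvgM e e_gt0; exists N => t /MN Mt i j; apply: le_lt_trans Mt.
  by have := ler_mx_norm_entry (L - M t) i j; rewrite !mxE.
have [N LN] := entries_cvg e e_gt0; exists N => // t /LN Lt.
change (mx_norm (L - M t) < e); rewrite mx_normrE.
by apply/bigmax_ltP; split=> // -[i j] _; rewrite !mxE.
Qed.

Lemma gauge_positive_of_cvg X0 A c : 0 < A -> signature c ->
  hbm_traj X0 @ \oo --> sign_outer_mx A c -> exists s, gauge_positive (hbm_traj X0 s).
Proof.
move=> A_gt0 c_sig /cvg_mx_entrywiseP/(_ A A_gt0) [N XN]; exists N, c => // i j.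
have := XN N (leqnn N) i j; rewrite -(dist_gauge _ _ _ _ c_sig).
by rewrite gauge_sign_outer_mx // ltr_distlC subrr => /andP[].
Qed.

Lemma hbm_min_abs_geP X (d : R) :
  (d%:E <= hbm_min_abs X)%E <-> forall i j, d <= `|X i j|.
Proof.
split=> [/bigmin_geP[_ rows_ge] i j | entries_ge].
  by have /bigmin_geP[_ /(_ j isT)] := rows_ge i isT; rewrite lee_fin.
apply: le_bigmin => [|i _]; first exact: leey.
by apply: le_bigmin => [|j _]; [exact: leey | rewrite lee_fin].
Qed.

Lemma non_vanishing_appraisalP (X : nat -> 'M[R]_n) :
  non_vanishing_appraisal X <->
  exists2 d : R, 0 < d & exists N, forall t, (N <= t)%N -> forall i j, d <= `|X t i j|.
Proof.
rewrite /non_vanishing_appraisal limn_einf_gt0P.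
by split=> -[d d_gt0 [N XN]]; exists d => //; exists N => t /XN/hbm_min_abs_geP.
Qed.

Lemma gauge_positive_non_vanishing X0 s : gauge_positive (hbm_traj X0 s) ->
  exists2 d : R, 0 < d &
    exists N, forall t, (N <= t)%N -> forall i j, d <= `|hbm_traj X0 t i j|.
Proof.
case=> c c_sig /gauge_bounded_gt0 [a [b [a_gt0 Xab]]].
exists a => //; exists s => t le_st i j; rewrite -(norm_gauge _ _ _ c_sig).
case/andP: (gauge_bounded_traj c_sig a_gt0 Xab le_st i j) => a_le _.
by rewrite (le_trans a_le) ?ler_norm.
Qed.

Lemma abs_row_sum_gt0 Z d : 0 < d -> (forall j k, d <= `|Z j k|) ->
  forall i, 0 < \sum_k `|Z i k|.
Proof.
by move=> d_gt0 Z_ge i; apply: (sum_gt0_term (i := i)) => //; apply: lt_le_trans d_gt0 _.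
Qed.

Lemma abs_row_sum_le Z A : (forall j k, `|Z j k| <= A) ->
  forall i, \sum_k `|Z i k| <= n%:R * A.
Proof.
by move=> Z_le i; rewrite -[in leRHS](card_ord n) ler_sum_cst.
Qed.

Lemma norm_f_HbM_le_wavg Y i j : (forall i, 0 < \sum_k `|Y i k|) ->
  `|f_HbM Y i j| <= wavg (fun k => `|Y i k|) (fun k => `|Y j k|).
Proof.
move=> rows_gt0; rewrite f_HbME // /wavg normrM normfV (gtr0_norm (rows_gt0 i)).
rewrite ler_pM2r ?invr_gt0 //; apply: le_trans (ler_norm_sum _ _ _) _.
by apply: ler_sum => k _; rewrite normrM.
Qed.

Lemma f_HbM_abs_le Z A : (forall i, 0 < \sum_k `|Z i k|) ->
  (forall j k, `|Z j k| <= A) -> forall i j, `|f_HbM Z i j| <= A.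
Proof.
move=> rows_gt0 Z_le i j; apply: le_trans (norm_f_HbM_le_wavg _ _ rows_gt0) _.
have /andP[_ ->] // : 0 <= wavg (fun k => `|Z i k|) (fun k => `|Z j k|) <= A.
by apply: wavg_bounds => // k; rewrite normr_ge0 Z_le.
Qed.

Lemma f_HbM_near_max Y d A eta i j : 0 < d -> (forall k l, d <= `|Y k l| <= A) ->
  A - eta < `|f_HbM Y i j| -> forall k, d * (A - `|Y j k|) < eta * (n%:R * A).
Proof.
move=> d_gt0 Y_dA near_max k.
have Y_ge k' l : d <= `|Y k' l| by case/andP: (Y_dA k' l).
have Y_le k' l : `|Y k' l| <= A by case/andP: (Y_dA k' l).
have rows_gt0 := abs_row_sum_gt0 d_gt0 Y_ge.
have A_gt0 : 0 < A := lt_le_trans d_gt0 (le_trans (Y_ge i i) (Y_le i i)).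
have nA_gt0 : 0 < n%:R * A by rewrite mulr_gt0 // ltr0n (leq_ltn_trans _ (ltn_ord i)).
set rho := d / (n%:R * A).
have gap : rho * (A - `|Y j k|) <= A - wavg (fun k => `|Y i k|) (fun k => `|Y j k|).
  rewrite wavg_rsub //; apply: wavg_ge_term => [l|l|//||].
  - exact: normr_ge0.
  - by rewrite subr_ge0.
  - by rewrite divr_ge0 ?ltW.
  - apply: le_trans (Y_ge i k).
    rewrite -[leRHS](divfK (lt0r_neq0 nA_gt0)) -/rho.
    by apply: ler_wpM2l; [rewrite divr_ge0 ?ltW | apply: abs_row_sum_le].
have := norm_f_HbM_le_wavg i j rows_gt0.
rewrite -ltr_pdivrMr // mulrAC -/rho; lra.
Qed.

(* If f_HbM Z j k had sign opposite to one term Z j l * Z k l of the sum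
   defining it, cancellation would keep it at least 2 d^2 / (n A) below A. *)
Lemma f_HbM_sign_coherent Z d A eta j k : 0 < d -> (forall l m, d <= `|Z l m| <= A) ->
  d <= `|f_HbM Z j k| -> d * (A - `|f_HbM Z j k|) < eta * (n%:R * A) ->
  eta * (n%:R * A) ^+ 2 <= 2 * d ^+ 3 -> forall l, 0 < f_HbM Z j k * Z j l * Z k l.
Proof.
move=> d_gt0 Z_dA Yjk_ge near_max eta_le l0; rewrite ltNge; apply/negP => opposite.
have Z_ge l m : d <= `|Z l m| by case/andP: (Z_dA l m).
have Z_le l m : `|Z l m| <= A by case/andP: (Z_dA l m).
have rows_gt0 := abs_row_sum_gt0 d_gt0 Z_ge.
set D := \sum_l `|Z j l|.
have D_gt0 : 0 < D := rows_gt0 j.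
have YjkE : f_HbM Z j k * D = \sum_l Z j l * Z k l.
  by rewrite f_HbME // divfK ?lt0r_neq0.
have Yjk_neq0 : f_HbM Z j k != 0 by rewrite -normr_gt0 (lt_le_trans d_gt0).
have sum_neq0 : \sum_l Z j l * Z k l != 0.
  by rewrite -YjkE mulf_neq0 // lt0r_neq0.
have sum_opp : (\sum_l Z j l * Z k l) * (Z j l0 * Z k l0) <= 0.
  by rewrite -YjkE mulrAC pmulr_lle0 // mulrA.
have := normr_sum_le_opposite sum_neq0 sum_opp.
rewrite -YjkE normrM (gtr0_norm D_gt0) => cancel.
have abs_sum_le : \sum_l `|Z j l * Z k l| <= A * D.
  rewrite /D mulr_sumr; apply: ler_sum => l _.
  by rewrite normrM [A * _]mulrC ler_pM2l ?Z_le // (lt_le_trans d_gt0).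
have term_ge : d * d <= `|Z j l0 * Z k l0|.
  by rewrite normrM; apply: ler_pM; rewrite ?(ltW d_gt0) ?Z_ge.
have Yjk_le : `|f_HbM Z j k| <= A := f_HbM_abs_le rows_gt0 Z_le j k.
have A_gt0 : 0 < A := lt_le_trans d_gt0 (le_trans (Z_ge j j) (Z_le j j)).
have nA_gt0 : 0 < n%:R * A by rewrite mulr_gt0 // ltr0n (leq_ltn_trans _ (ltn_ord j)).
have gap_D : 2 * (d * d) <= (A - `|f_HbM Z j k|) * D by rewrite mulrBl; lra.
have gap_nA : d * ((A - `|f_HbM Z j k|) * D) <= d * ((A - `|f_HbM Z j k|) * (n%:R * A)).
  apply: ler_wpM2l; first exact: ltW.
  by apply: ler_wpM2l; [rewrite subr_ge0 | apply: abs_row_sum_le].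
have near_max_nA : d * (A - `|f_HbM Z j k|) * (n%:R * A) < eta * (n%:R * A) * (n%:R * A).
  by rewrite ltr_pM2r.
have gap_D_d : d * (2 * (d * d)) <= d * ((A - `|f_HbM Z j k|) * D).
  by rewrite ler_pM2l.
move: eta_le; rewrite !exprS expr0 !mulr1; lra.
Qed.

Lemma sign_rank1_gauge_positive_f_HbM Z (c tau : 'I_n -> R) :
  signature c -> signature tau -> (forall k l, 0 < c k * tau l * Z k l) ->
  gauge_positive (f_HbM Z).
Proof.
move=> c_sig tau_sig Z_sign; exists c => // i k.
have rows_gt0 i' : 0 < \sum_l `|Z i' l|.
  apply: (sum_gt0_term (i := i')) => //; rewrite normr_gt0.
  by apply: contraTneq (Z_sign i' i') => ->; rewrite mulr0 ltxx.
rewrite /gauge f_HbME // mulrA; apply: divr_gt0 => //; rewrite mulr_sumr.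
rewrite (eq_bigr (fun l => (c i * tau l * Z i l) * (c k * tau l * Z k l))) => [|l _].
  by apply: (sum_gt0_term (i := i)) => [l|]; [apply: ltW|]; apply: mulr_gt0.
transitivity (c i * c k * (Z i l * Z k l) * (tau l * tau l)); last by ring.
by rewrite (signature_mulss tau_sig) mulr1.
Qed.

Lemma gauge_positive_f_HbM_near_max Z d A eta i j : 0 < d ->
  (forall k l, d <= `|Z k l| <= A) -> (forall k l, d <= `|f_HbM Z k l| <= A) ->
  eta * (n%:R * A) ^+ 2 <= 2 * d ^+ 3 -> A - eta < `|f_HbM (f_HbM Z) i j| ->
  gauge_positive (f_HbM Z).
Proof.
move=> d_gt0 Z_dA Y_dA eta_le near_max.
have Y_ge k l : d <= `|f_HbM Z k l| by case/andP: (Y_dA k l).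
have Z_ge k l : d <= `|Z k l| by case/andP: (Z_dA k l).
have neq0 (M : 'M[R]_n) k l : d <= `|M k l| -> M k l != 0.
  by move=> M_ge; rewrite -normr_gt0 (lt_le_trans d_gt0).
apply: (@sign_rank1_gauge_positive_f_HbM _ (fun k => Num.sg (f_HbM Z j k))
  (fun l => Num.sg (Z j l))); try by apply: sgr_signature => k; apply: neq0.
move=> k l; rewrite -sgr_gt0 !sgrM !sgr_id -!sgrM sgr_gt0.
exact: f_HbM_sign_coherent (f_HbM_near_max d_gt0 Y_dA near_max k) eta_le l.
Qed.

(* Without a balancing gauge the maximal modulus would drop by a fixed eta
   every two steps while staying above d. *)
Lemma gauge_positive_of_non_vanishing X0 d T : (0 < n)%N -> 0 < d ->
  (forall t, (T <= t)%N -> forall i j, d <= `|hbm_traj X0 t i j|) ->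
  exists s, gauge_positive (hbm_traj X0 s).
Proof.
move=> n_gt0 d_gt0 X_ge; pose i0 := Ordinal n_gt0.
case: (pselect (exists s, gauge_positive (hbm_traj X0 s))) => // no_pos.
exfalso; pose M t := `|hbm_traj X0 t|.
have X_le t i j : `|hbm_traj X0 t i j| <= M t := ler_mx_norm_entry _ i j.
have M_ge t : (T <= t)%N -> d <= M t.
  by move=> le_Tt; apply: le_trans (X_ge t le_Tt i0 i0) (X_le _ _ _).
have M_ge0 t : (T <= t)%N -> 0 <= M t by move/M_ge; apply/le_trans/ltW.
have M_succ t : (T <= t)%N -> M t.+1 <= M t.
  move=> le_Tt; apply: mx_norm_le; first exact: M_ge0.
  by rewrite hbm_trajS; apply: f_HbM_abs_le; [apply: abs_row_sum_gt0 (X_ge t _) | ].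
have M_le t : (T <= t)%N -> M t <= M T.
  move=> /subnKC <-; elim: (t - T)%N => [|k IHk]; first by rewrite addn0.
  by rewrite addnS; apply: le_trans (M_succ _ (leq_addr _ _)) IHk.
have nMT_gt0 : 0 < n%:R * M T.
  by rewrite mulr_gt0 ?ltr0n // (lt_le_trans d_gt0 (M_ge _ _)).
pose eta := 2 * d ^+ 3 / (n%:R * M T) ^+ 2.
have eta_gt0 : 0 < eta.
  by apply: divr_gt0; [apply: mulr_gt0; [lra | exact: exprn_gt0] | exact: exprn_gt0].
apply: (no_uniform_descent eta_gt0 M_ge) => t le_Tt.
have X2_le i j : `|hbm_traj X0 t.+2 i j| <= M t - eta.
  rewrite leNgt; apply/negP => near_max; apply: no_pos; exists t.+1.
  rewrite hbm_trajS; apply: (@gauge_positive_f_HbM_near_max _ d (M t) eta i j) => //.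
  - by move=> k l; rewrite X_ge ?X_le.
  - move=> k l; rewrite -hbm_trajS X_ge ?(leqW le_Tt) //.
    by rewrite (le_trans (X_le _ _ _)) ?M_succ.
  - rewrite -[leRHS](divfK (lt0r_neq0 (exprn_gt0 2 nMT_gt0))).
    apply: ler_wpM2l; first exact: ltW.
    apply: lerXn2r; rewrite ?nnegrE ?mulr_ge0 ?M_ge0 ?(ltW nMT_gt0) //.
    by apply: ler_wpM2l; [| apply: M_le].
exact: mx_norm_le (le_trans (normr_ge0 _) (X2_le i0 i0)) X2_le.
Qed.

(* The weight of column k is at least a >= rho * n b >= rho * (total weight),
   so the average of row j is pulled away from the bounds by rho times the
   distance of its k-th entry to them. *)
Lemma gauge_f_HbM_gap c Z a b rho i j k : signature c -> 0 < a ->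
  gauge_bounded c Z a b -> 0 <= rho -> rho * (n%:R * b) <= a ->
  rho * (gauge c Z j k - a) <= gauge c (f_HbM Z) i j - a /\
  rho * (b - gauge c Z j k) <= b - gauge c (f_HbM Z) i j.
Proof.
move=> c_sig a_gt0 Zab rho_ge0 rho_le.
have Z_ge k' l : a <= gauge c Z k' l by case/andP: (Zab k' l).
have Z_le k' l : gauge c Z k' l <= b by case/andP: (Zab k' l).
have Z_gt0 k' l : 0 < gauge c Z k' l := lt_le_trans a_gt0 (Z_ge k' l).
have w_ge0 l : 0 <= gauge c Z i l := ltW (Z_gt0 i l).
have sum_gt0 : 0 < \sum_l gauge c Z i l := sum_gt0_term w_ge0 (Z_gt0 i i).
have rho_sum : rho * \sum_l gauge c Z i l <= gauge c Z i k.
  apply: le_trans (Z_ge i k); apply: le_trans rho_le; apply: ler_wpM2l => //.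
  by rewrite -[in leRHS](card_ord n) ler_sum_cst.
rewrite gauge_f_HbM // wavg_subr // wavg_rsub //.
by split; apply: wavg_ge_term => // l; rewrite subr_ge0.
Qed.

Lemma gauge_f_HbM2_bounded c Z a b rho m : signature c -> 0 < a ->
  gauge_bounded c Z a b -> 0 <= rho -> rho * (n%:R * b) <= a ->
  gauge_bounded c (f_HbM (f_HbM Z))
    (a + rho ^+ 2 * (gauge c Z m m - a)) (b - rho ^+ 2 * (b - gauge c Z m m)).
Proof.
move=> c_sig a_gt0 Zab rho_ge0 rho_le i j.
have [lo1 hi1] := gauge_f_HbM_gap i j m c_sig a_gt0
  (gauge_bounded_f_HbM c_sig a_gt0 Zab) rho_ge0 rho_le.
have [lo2 hi2] := gauge_f_HbM_gap j m m c_sig a_gt0 Zab rho_ge0 rho_le.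
have := ler_wpM2l rho_ge0 lo2; have := ler_wpM2l rho_ge0 hi2.
by rewrite expr2 => *; apply/andP; split; lra.
Qed.

End HbM.

Section GaugeConvergence.
Variables (R : realType) (n : nat) (X0 : 'M[R]_n) (c : 'I_n -> R) (s : nat).
Hypotheses (n_gt0 : (0 < n)%N) (c_sig : signature c).
Hypothesis gauge_gt0 : forall i j, 0 < gauge c (hbm_traj X0 s) i j.

Let i0 := Ordinal n_gt0.
Let g t := gauge c (hbm_traj X0 t).
Let lo t := \big[Num.min/g t i0 i0]_(jk : 'I_n * 'I_n) g t jk.1 jk.2.
Let hi t := \big[Num.max/g t i0 i0]_(jk : 'I_n * 'I_n) g t jk.1 jk.2.

Let lo_hi_bounded t : gauge_bounded c (hbm_traj X0 t) (lo t) (hi t).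
Proof.
move=> j k; rewrite (bigmin_le _ (j, k)).
by rewrite (le_bigmax _ (fun jk => g t jk.1 jk.2) (j, k)).
Qed.

Let ler_lo t a : (forall j k, a <= g t j k) -> a <= lo t.
Proof. by move=> a_le; apply: le_bigmin => // -[]. Qed.

Let hi_ler t b : (forall j k, g t j k <= b) -> hi t <= b.
Proof. by move=> le_b; apply: bigmax_le => // -[]. Qed.

Let lo_gt0 : 0 < lo s.
Proof. by apply/bigmin_gtP; split=> [|[j k] _]; apply: gauge_gt0. Qed.

Let lo_hi_succ t : 0 < lo t -> lo t <= lo t.+1 /\ hi t.+1 <= hi t.
Proof.
move=> lo_t_gt0; have := gauge_bounded_f_HbM c_sig lo_t_gt0 (lo_hi_bounded t).
rewrite -hbm_trajS => bounded.
by split; [apply: ler_lo | apply: hi_ler] => j k; case/andP: (bounded j k).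
Qed.

Let lo_pos t : (s <= t)%N -> 0 < lo t.
Proof.
move=> /subnKC <-; elim: (t - s)%N => [|k IHk]; first by rewrite addn0; apply: lo_gt0.
by rewrite addnS; apply: lt_le_trans IHk (proj1 (lo_hi_succ IHk)).
Qed.

Let lo_hi_mono t k : (s <= t)%N -> lo t <= lo (t + k) /\ hi (t + k) <= hi t.
Proof.
move=> le_st; elim: k => [|k [lo_le hi_le]]; first by rewrite addn0 !lexx.
have [lo_le' hi_le'] := lo_hi_succ (lo_pos (leq_trans le_st (leq_addr k t))).
by rewrite addnS; split; [apply: le_trans lo_le' | apply: le_trans hi_le].
Qed.

Let rho := lo s / (n%:R * hi s).

Let hi_s_gt0 : 0 < hi s.
Proof.
case/andP: (lo_hi_bounded s i0 i0) => lo_le le_hi.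
exact: lt_le_trans lo_gt0 (le_trans lo_le le_hi).
Qed.

Let nhi_gt0 : 0 < n%:R * hi s.
Proof. by rewrite mulr_gt0 ?ltr0n // hi_s_gt0. Qed.

Let rho_gt0 : 0 < rho.
Proof. by rewrite divr_gt0. Qed.

Let width_contract t : (s <= t)%N ->
  hi t.+2 - lo t.+2 <= (1 - rho ^+ 2) * (hi t - lo t).
Proof.
move=> le_st; have [lo_s_le hi_le_s] := lo_hi_mono (t - s) (leqnn s).
rewrite subnKC // in lo_s_le hi_le_s.
have rho_le : rho * (n%:R * hi t) <= lo t.
  apply: le_trans lo_s_le; rewrite -[leRHS](divfK (lt0r_neq0 nhi_gt0)) -/rho.
  by apply: ler_wpM2l; [exact: ltW | apply: ler_wpM2l].
have := gauge_f_HbM2_bounded i0 c_sig (lt_le_trans lo_gt0 lo_s_le) (lo_hi_bounded t)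
  (ltW rho_gt0) rho_le.
rewrite -!hbm_trajS => bounded.
have lo2_ge := ler_lo (fun j k => proj1 (andP (bounded j k))).
have hi2_le := hi_ler (fun j k => proj2 (andP (bounded j k))).
rewrite mulrBl mul1r; lra.
Qed.

Let width_vanishes eps : 0 < eps ->
  exists N, forall t, (N <= t)%N -> hi t - lo t < eps.
Proof.
move=> eps_gt0.
case: (pselect (exists2 t, (s <= t)%N & hi t - lo t < eps)) => [[t le_st small] | wide].
  exists t => t' /subnKC <-; have [lo_le hi_le] := lo_hi_mono (t' - t) le_st.
  by apply: le_lt_trans small; lra.
exfalso; have width_ge t : (s <= t)%N -> eps <= hi t - lo t.
  by move=> le_st; rewrite leNgt; apply/negP => small; apply: wide; exists t.
apply: (no_uniform_descent (mulr_gt0 (exprn_gt0 2 rho_gt0) eps_gt0) width_ge) => t le_st.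
have := width_contract le_st.
have := ler_wpM2l (ltW (exprn_gt0 2 rho_gt0)) (width_ge t le_st).
rewrite mulrBl mul1r; lra.
Qed.

Lemma cvg_traj_sign_outer_mx :
  exists2 L, 0 < L & hbm_traj X0 @ \oo --> sign_outer_mx L c.
Proof.
pose L := sup (range (fun k => lo (s + k))).
have L_ub : has_ubound (range (fun k => lo (s + k))).
  exists (hi s) => _ [k _ <-]; have [_ hi_le] := lo_hi_mono k (leqnn s).
  by have /andP[lo_le_g g_le_hi] := lo_hi_bounded (s + k) i0 i0; lra.
have L_bounds t : (s <= t)%N -> lo t <= L <= hi t.
  move=> le_st; apply/andP; split.
    by apply: (ub_le_sup L_ub); exists (t - s)%N => //; rewrite subnKC.
  apply: ge_sup; first by exists (lo (s + 0)%N), 0%N.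
  move=> _ [k _ <-]; have [lo_le _] := lo_hi_mono t (leq_addr k s).
  have [_ hi_le] := lo_hi_mono (s + k) le_st.
  have /andP[lo_le_g g_le_hi] := lo_hi_bounded (s + k + t) i0 i0.
  by rewrite [(t + _)%N]addnC in hi_le; lra.
exists L.
  have /andP[lo_le _] := L_bounds s (leqnn s).
  exact: lt_le_trans (lo_pos (leqnn s)) lo_le.
apply/cvg_mx_entrywiseP => e e_gt0; have [N small] := width_vanishes e_gt0.
exists (maxn N s) => t; rewrite geq_max => /andP[le_Nt le_st] i j.
rewrite -(dist_gauge _ _ _ _ c_sig) gauge_sign_outer_mx //.
have /andP[lo_le_g g_le_hi] := lo_hi_bounded t i j.
have /andP[lo_le_L L_le_hi] := L_bounds t le_st.
have := small t le_Nt; rewrite ltr_distlC => small_t.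
apply/andP; split; lra.
Qed.

End GaugeConvergence.

Unset Implicit Arguments.

Theorem theorem3p7 (R : realType) (n : nat) (hn : (0 < n)%N) :
  (forall Xs : 'M[R]_n, in_Q_HbM Xs -> \rank Xs = 1%N ->
     is_fixed_point Xs /\ locally_stable Xs) /\
  (forall X0 : 'M[R]_n, hbm_nz_row X0 ->
     (non_vanishing_appraisal (hbm_traj X0) <->
        exists t0 : nat, (0 < t0)%N /\
          forall t : nat, (t0 <= t)%N -> social_balance (hbm_traj X0 t)) /\
     ((exists t0 : nat, (0 < t0)%N /\
          forall t : nat, (t0 <= t)%N -> social_balance (hbm_traj X0 t)) <->
      (exists Xs : 'M[R]_n, in_Q_HbM Xs /\ \rank Xs = 1%N /\
          hbm_traj X0 @ \oo --> Xs))).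
Proof.
split=> [Xs XsQ rkXs | X0 _].
  have [A [c [A_gt0 c_sig ->]]] := in_Q_HbM_rank1 XsQ rkXs.
  by split; [apply: sign_outer_mx_fixed | apply: sign_outer_mx_stable].
have balanceP := eventually_social_balanceP X0 hn.
split; split.
- case/non_vanishing_appraisalP => d d_gt0 [T X_ge]; apply/balanceP.
  exact: gauge_positive_of_non_vanishing hn d_gt0 X_ge.
- by case/balanceP => s /gauge_positive_non_vanishing /non_vanishing_appraisalP.
- case/balanceP => s [c c_sig /(cvg_traj_sign_outer_mx hn c_sig) [L L_gt0 cvgX]].
  exists (sign_outer_mx L c).
  by rewrite rank_sign_outer_mx //; split; first exact: sign_outer_mx_in_Q.
- case=> Xs [XsQ [rkXs cvgX]]; apply/balanceP.
  have [A [c [A_gt0 c_sig XsE]]] := in_Q_HbM_rank1 XsQ rkXs.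
  by apply: (gauge_positive_of_cvg A_gt0 c_sig); rewrite -XsE.
Qed.
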